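(* Let $H,A$ be as in the context and let $\alpha\in A$ be a non-trivial element invariant under the adjoint coaction, i.e. $\alpha_{(1)}S\alpha_{(3)}\otimes\alpha_{(2)}=1\otimes\alpha$. Then each of the following subspaces of $\ker\epsilon\subset H$ is stable under the quantum double action $h\triangleright x=h_{(1)}xSh_{(2)}$, $a\triangleright x=\langle a,x_{(1)}\rangle x_{(2)}-\langle a,x\rangle1$: \[L_\alpha=\{x\in\ker\epsilon\mid x_{(1)}\langle x_{(2)},\alpha\rangle=x\,\epsilon(\alpha)\},\] \[\widetilde{L_\alpha}=\{x\in\ker\epsilon\mid \langle x,a\alpha\rangle=\langle x,a\rangle\epsilon(\alpha)\ \forall a\in\ker\epsilon\subset A\},\] \[L_{\alpha,1}=\{x\in\ker\epsilon\mid \langle x,a\alpha\rangle=\langle x,a\rangle(\epsilon(\alpha)+1)\ \forall a\in\ker\epsilon\subset A\}.\] Moreover $L_\alpha$ is the quantum tangent space (annihilator in $\ker\epsilon\subset H$) of the bicovariant calculus obtained by quotienting $\ker\epsilon\subset A$ by $\{a\alpha-a\epsilon(\alpha)\mid a\in A\}$ (inner type-I), and $L_{\alpha,1}$ is that of the calculus obtained by quotienting $\ker\epsilon\subset A$ by $(\ker\epsilon)\cdot(\alpha-(\epsilon(\alpha)+1))$ (inner type-II).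
   Context: $H,A$ are Hopf algebras over $\mathbb{C}$ with invertible antipodes, non-degenerately paired by a Hopf pairing $\langle\ ,\ \rangle$ ($\langle hg,a\rangle=\langle h,a_{(1)}\rangle\langle g,a_{(2)}\rangle$, $\langle h,ab\rangle=\langle h_{(1)},a\rangle\langle h_{(2)},b\rangle$); Sweedler notation. The quantum tangent space of a bicovariant calculus defined by a quotienting subspace $M\subseteq\ker\epsilon\subset A$ (stable under left multiplication and the coaction $v\mapsto v_{(1)}Sv_{(3)}\otimes v_{(2)}$) is $\{x\in\ker\epsilon\subset H\mid\langle x,m\rangle=0\ \forall m\in M\}$. *)

From HB Require Import structures.
From mathcomp Require Import all_boot all_order all_algebra.
From mathcomp Require Import complex.
From mathcomp Require Import Rstruct.
Set Implicit Arguments. Unset Strict Implicit. Unset Printing Implicit Defensive.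
Import Order.TTheory GRing.Theory Num.Theory.
Local Open Scope ring_scope.

Definition CC : fieldType := (Rdefinitions.R)[i].

Section HopfDefs.
Variable K : fieldType.

Definition bilinear_map (V W U : lmodType K) (f : V -> W -> U) : Prop :=
  (forall c v1 v2 w, f (c *: v1 + v2) w = c *: f v1 w + f v2 w) /\
  (forall c v w1 w2, f v (c *: w1 + w2) = c *: f v w1 + f v w2).

Definition trilinear_map (V W X U : lmodType K) (f : V -> W -> X -> U) : Prop :=
  (forall c v1 v2 w x, f (c *: v1 + v2) w x = c *: f v1 w x + f v2 w x) /\
  (forall c v w1 w2 x, f v (c *: w1 + w2) x = c *: f v w1 x + f v w2 x) /\
  (forall c v w x1 x2, f v w (c *: x1 + x2) = c *: f v w x1 + f v w x2).

(* A finite list s of pairs represents the tensor  sum_(p in s) p.1 (x) p.2.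
   Two such lists represent the same element of V (x) W iff every bilinear
   map (universal property of the tensor product) agrees on them. *)
Definition teq2 (V W : lmodType K) (s t : seq (V * W)) : Prop :=
  forall (U : lmodType K) (f : V -> W -> U), bilinear_map f ->
    \sum_(p <- s) f p.1 p.2 = \sum_(p <- t) f p.1 p.2.

Definition teq3 (V W X : lmodType K) (s t : seq (V * W * X)) : Prop :=
  forall (U : lmodType K) (f : V -> W -> X -> U), trilinear_map f ->
    \sum_(p <- s) f p.1.1 p.1.2 p.2 = \sum_(p <- t) f p.1.1 p.1.2 p.2.

(* Hopf algebra structure (D = coproduct as Sweedler list, e = counit,
   S = antipode), with invertible antipode. *)
Definition is_hopf (H : algType K) (D : H -> seq (H * H)) (e : H -> K)
    (S : H -> H) : Prop :=
  [/\
      (forall c x y, teq2 (D (c *: x + y))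
                          ([seq (c *: p.1, p.2) | p <- D x] ++ D y)),
      (forall x, teq3 [seq (q.1, q.2, p.2) | p <- D x, q <- D p.1]
                      [seq (p.1, q.1, q.2) | p <- D x, q <- D p.2]),
      (forall x y, teq2 (D (x * y))
                        [seq (p.1 * q.1, p.2 * q.2) | p <- D x, q <- D y])
        /\ teq2 (D 1) [:: (1, 1)],
      [/\ forall c x y, e (c *: x + y) = c * e x + e y,
          e 1 = 1, forall x y, e (x * y) = e x * e y,
          forall x, \sum_(p <- D x) e p.1 *: p.2 = x &
          forall x, \sum_(p <- D x) e p.2 *: p.1 = x] &
      [/\ forall c x y, S (c *: x + y) = c *: S x + S y,
          forall x, \sum_(p <- D x) S p.1 * p.2 = e x *: 1,
          forall x, \sum_(p <- D x) p.1 * S p.2 = e x *: 1 &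
          exists S' : H -> H, cancel S S' /\ cancel S' S]].

Definition is_hopf_pairing (H A : algType K)
    (DH : H -> seq (H * H)) (eH : H -> K)
    (DA : A -> seq (A * A)) (eA : A -> K) (pr : H -> A -> K) : Prop :=
  [/\ forall c h1 h2 a, pr (c *: h1 + h2) a = c * pr h1 a + pr h2 a,
      forall c h a1 a2, pr h (c *: a1 + a2) = c * pr h a1 + pr h a2,
      forall h g a, pr (h * g) a = \sum_(p <- DA a) pr h p.1 * pr g p.2,
      forall h a b, pr h (a * b) = \sum_(p <- DH h) pr p.1 a * pr p.2 b &
      (forall a, pr 1 a = eA a) /\ (forall h, pr h 1 = eH h)].

Definition pairing_nondegenerate (H A : algType K) (pr : H -> A -> K) : Prop :=
  (forall h, (forall a, pr h a = 0) -> h = 0) /\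
  (forall a, (forall h, pr h a = 0) -> a = 0).

(* Adjoint coaction v |-> v_(1) S v_(3) (x) v_(2), as a Sweedler list
   (using (Delta (x) id) Delta v = v_(1) (x) v_(2) (x) v_(3)). *)
Definition adcoact (A : algType K) (DA : A -> seq (A * A)) (SA : A -> A)
    (v : A) : seq (A * A) :=
  [seq (q.1 * SA p.2, q.2) | p <- DA v, q <- DA p.1].

(* Quotienting subspace M of ker eps in A defining a bicovariant calculus:
   a subspace of ker eps, stable under left multiplication and under the
   adjoint coaction (Ad(M) subset A (x) M). *)
Definition quotienting_subspace (A : algType K) (DA : A -> seq (A * A))
    (eA : A -> K) (SA : A -> A) (M : A -> Prop) : Prop :=
  [/\ forall m, M m -> eA m = 0,
      M 0,
      forall c m n, M m -> M n -> M (c *: m + n),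
      forall a m, M m -> M (a * m) &
      forall m, M m -> exists s : seq (A * A),
         (forall p, p \in s -> M p.2) /\ teq2 (adcoact DA SA m) s].

Definition quantum_tangent_space (H A : algType K) (eH : H -> K)
    (pr : H -> A -> K) (M : A -> Prop) (x : H) : Prop :=
  eH x = 0 /\ forall m, M m -> pr x m = 0.

Definition dactH (H : algType K) (DH : H -> seq (H * H)) (SH : H -> H)
    (h x : H) : H :=
  \sum_(p <- DH h) p.1 * x * SH p.2.

Definition dactA (H A : algType K) (DH : H -> seq (H * H))
    (pr : H -> A -> K) (a : A) (x : H) : H :=
  \sum_(p <- DH x) pr p.1 a *: p.2 - pr x a *: 1.

Definition double_stable (H A : algType K) (DH : H -> seq (H * H))
    (SH : H -> H) (pr : H -> A -> K) (P : H -> Prop) : Prop :=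
  (forall h x, P x -> P (dactH DH SH h x)) /\
  (forall a x, P x -> P (dactA DH pr a x)).

Definition L_alpha (H A : algType K) (DH : H -> seq (H * H)) (eH : H -> K)
    (eA : A -> K) (pr : H -> A -> K) (alpha : A) (x : H) : Prop :=
  eH x = 0 /\ \sum_(p <- DH x) pr p.2 alpha *: p.1 = eA alpha *: x.

Definition Lt_alpha (H A : algType K) (eH : H -> K)
    (eA : A -> K) (pr : H -> A -> K) (alpha : A) (x : H) : Prop :=
  eH x = 0 /\
  forall a, eA a = 0 -> pr x (a * alpha) = pr x a * eA alpha.

Definition L_alpha1 (H A : algType K) (eH : H -> K)
    (eA : A -> K) (pr : H -> A -> K) (alpha : A) (x : H) : Prop :=
  eH x = 0 /\
  forall a, eA a = 0 -> pr x (a * alpha) = pr x a * (eA alpha + 1).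

Definition M_typeI (A : algType K) (eA : A -> K) (alpha : A) (m : A) : Prop :=
  exists a : A, m = a * alpha - eA alpha *: a.

Definition M_typeII (A : algType K) (eA : A -> K) (alpha : A) (m : A) : Prop :=
  exists a : A, eA a = 0 /\ m = a * (alpha - (eA alpha + 1) *: 1).

End HopfDefs.

From HB Require Import structures.
From mathcomp Require Import all_boot all_order all_algebra.
From mathcomp Require Import ring.
Import GRing.Theory.
Local Open Scope ring_scope.

(* Through the pairing the double actions become operations on the
   functional <x, .>:  <h |> x, b> = <h, b_1 S(b_3)> <x, b_2>  and
   <a |> x, b> = <x, a b> - <x, a> eA(b).  Each of the three subspaces says
   that right multiplication by alpha acts on <x, .> (restricted to ker eA for
   the last two) as a scalar.  The action of A visibly preserves this; the
   action of H does because the invariance of alpha gives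
   Ad(b alpha) = Ad(b) (1 (x) alpha).  The same identity makes the generating
   subspaces of the inner calculi Ad-stable, and their annihilators are the
   subspaces above read through the pairing (for L_alpha, via nondegeneracy of
   the pairing on H). *)

Set Implicit Arguments.
Unset Strict Implicit.

Section LinearMaps.
Variable K : fieldType.

Definition linear_map (V W : lmodType K) (g : V -> W) : Prop :=
  forall c x y, g (c *: x + y) = c *: g x + g y.

Definition linear_form (V : lmodType K) (g : V -> K) : Prop :=
  linear_map (g : V -> K^o).

Section LinearMapTheory.
Variables (V W : lmodType K) (g : V -> W).
Hypothesis g_linear : linear_map g.

Lemma linear_map0 : g 0 = 0.
Proof.
have := g_linear 1 0 0; rewrite addr0 !scale1r => g00.
by apply: (@addrI _ (g 0)); rewrite -g00 addr0.
Qed.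

Lemma linear_mapZ c x : g (c *: x) = c *: g x.
Proof. by rewrite -[c *: x]addr0 g_linear linear_map0 addr0. Qed.

Lemma linear_mapD x y : g (x + y) = g x + g y.
Proof. by have := g_linear 1 x y; rewrite !scale1r. Qed.

Lemma linear_mapB x y : g (x - y) = g x - g y.
Proof. by rewrite linear_mapD -scaleN1r linear_mapZ scaleN1r. Qed.

Lemma linear_map_sum (I : Type) (r : seq I) (F : I -> V) :
  g (\sum_(i <- r) F i) = \sum_(i <- r) g (F i).
Proof. exact: (big_morph g linear_mapD linear_map0). Qed.

End LinearMapTheory.

Lemma linear_formP (V : lmodType K) (g : V -> K) :
  (forall c x y, g (c *: x + y) = c * g x + g y) -> linear_form g.
Proof. by []. Qed.

Section LinearFormTheory.
Variables (V : lmodType K) (g : V -> K).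
Hypothesis g_linear : linear_form g.

Lemma linear_form0 : g 0 = 0.
Proof. exact: (linear_map0 g_linear). Qed.

Lemma linear_formZ c x : g (c *: x) = c * g x.
Proof. exact: (linear_mapZ g_linear). Qed.

Lemma linear_formB x y : g (x - y) = g x - g y.
Proof. exact: (linear_mapB g_linear). Qed.

Lemma linear_form_sum (I : Type) (r : seq I) (F : I -> V) :
  g (\sum_(i <- r) F i) = \sum_(i <- r) g (F i).
Proof. exact: (linear_map_sum g_linear). Qed.

End LinearFormTheory.

Lemma linear_map_sum_fun (V W : lmodType K) (I : Type) (r : seq I)
    (F : I -> V -> W) :
  (forall i, linear_map (F i)) -> linear_map (fun x => \sum_(i <- r) F i x).
Proof.
move=> F_linear c x y; rewrite scaler_sumr -big_split /=.
by apply: eq_bigr => i _; rewrite F_linear.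
Qed.

Lemma linear_map_comp (U V W : lmodType K) (g : V -> W) (h : U -> V) :
  linear_map g -> linear_map h -> linear_map (fun x => g (h x)).
Proof. by move=> g_linear h_linear c x y; rewrite h_linear g_linear. Qed.

Lemma linear_map_mull (A : lalgType K) (a : A) : linear_map (fun x : A => x * a).
Proof. by move=> c x y; rewrite mulrDl scalerAl. Qed.

Lemma linear_map_mulr (A : algType K) (a : A) : linear_map (fun x : A => a * x).
Proof. by move=> c x y; rewrite mulrDr scalerAr. Qed.

Lemma bilinear_mapP (V W U : lmodType K) (f : V -> W -> U) :
  (forall w, linear_map (fun v => f v w)) -> (forall v, linear_map (f v)) ->
  bilinear_map f.
Proof. by move=> fl fr; split=> *; [apply: fl | apply: fr]. Qed.

Lemma bilinear_map_l (V W U : lmodType K) (f : V -> W -> U) w :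
  bilinear_map f -> linear_map (fun v => f v w).
Proof. by case=> fl _ c x y; apply: fl. Qed.

Lemma bilinear_map_r (V W U : lmodType K) (f : V -> W -> U) v :
  bilinear_map f -> linear_map (f v).
Proof. by case=> _ fr c x y; apply: fr. Qed.

Lemma trilinear_mapP (V W X U : lmodType K) (f : V -> W -> X -> U) :
  (forall w x, linear_map (fun v => f v w x)) ->
  (forall v x, linear_map (fun w => f v w x)) ->
  (forall v w, linear_map (f v w)) -> trilinear_map f.
Proof.
by move=> f1 f2 f3; split; [|split]=> *; [apply: f1 | apply: f2 | apply: f3].
Qed.

End LinearMaps.

Section HopfAlgebra.
Variables (K : fieldType) (A : algType K).
Variables (D : A -> seq (A * A)) (e : A -> K) (S : A -> A).
Hypothesis hopfA : is_hopf D e S.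

Lemma counit_linear : linear_form e.
Proof. by case: hopfA => _ _ _ [e_linear _ _ _ _] _ c x y; apply: e_linear. Qed.

Lemma counit1 : e 1 = 1.
Proof. by case: hopfA => _ _ _ []. Qed.

Lemma counitM x y : e (x * y) = e x * e y.
Proof. by case: hopfA => _ _ _ []. Qed.

Lemma counitl x : \sum_(p <- D x) e p.1 *: p.2 = x.
Proof. by case: hopfA => _ _ _ []. Qed.

Lemma counitr x : \sum_(p <- D x) e p.2 *: p.1 = x.
Proof. by case: hopfA => _ _ _ []. Qed.

Lemma antipode_linear : linear_map S.
Proof. by case: hopfA => _ _ _ _ []. Qed.

Lemma antipodeL x : \sum_(p <- D x) S p.1 * p.2 = e x *: 1.
Proof. by case: hopfA => _ _ _ _ []. Qed.

Lemma antipodeR x : \sum_(p <- D x) p.1 * S p.2 = e x *: 1.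
Proof. by case: hopfA => _ _ _ _ []. Qed.

Lemma coproduct_linear (U : lmodType K) (f : A -> A -> U) : bilinear_map f ->
  linear_map (fun x => \sum_(p <- D x) f p.1 p.2).
Proof.
move=> f_bilinear c x y; case: hopfA => D_linear _ _ _ _.
rewrite (D_linear c x y U f f_bilinear) big_cat big_map /= scaler_sumr.
congr (_ + _); apply: eq_bigr => p _.
by rewrite (linear_mapZ (bilinear_map_l _ f_bilinear)).
Qed.

Lemma coproductM (U : lmodType K) (f : A -> A -> U) x y : bilinear_map f ->
  \sum_(p <- D (x * y)) f p.1 p.2 =
  \sum_(p <- D x) \sum_(q <- D y) f (p.1 * q.1) (p.2 * q.2).
Proof.
case: hopfA => _ _ [D_mul _] _ _ f_bilinear.
by rewrite (D_mul x y U f f_bilinear) big_allpairs_dep.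
Qed.

Lemma coassoc (U : lmodType K) (f : A -> A -> A -> U) x : trilinear_map f ->
  \sum_(p <- D x) \sum_(q <- D p.1) f q.1 q.2 p.2 =
  \sum_(p <- D x) \sum_(q <- D p.2) f p.1 q.1 q.2.
Proof.
case: hopfA => _ D_coassoc _ _ _ f_trilinear.
by have := D_coassoc x U f f_trilinear; rewrite !big_allpairs_dep.
Qed.

Let S_linear c x y : S (c *: x + y) = c *: S x + S y.
Proof. exact: antipode_linear. Qed.

Ltac multilinear :=
  move=> c x y;
  repeat progress rewrite ?mulrDl ?mulrDr -?scalerAl -?scalerAr ?S_linear
                          ?scalerDr ?scalerA.

Lemma antipodeR_mull u y : \sum_(p <- D y) u * p.1 * S p.2 = e y *: u.
Proof.
transitivity (u * \sum_(p <- D y) p.1 * S p.2).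
  by rewrite mulr_sumr; apply: eq_bigr => p _; rewrite mulrA.
by rewrite antipodeR -scalerAr mulr1.
Qed.

Lemma antipodeL_mulr u y : \sum_(p <- D y) S p.1 * p.2 * u = e y *: u.
Proof. by rewrite -mulr_suml antipodeL -scalerAl mul1r. Qed.

Lemma antipode_mul_expand a b :
  S (a * b) = \sum_(p <- D a) \sum_(p' <- D p.2) \sum_(q <- D b) \sum_(q' <- D q.2)
                S (p.1 * q.1) * (p'.1 * q'.1) * S q'.2 * S p'.2.
Proof.
have -> : a * b = \sum_(p <- D a) \sum_(q <- D b) (e p.2 * e q.2) *: (p.1 * q.1).
  rewrite -{1}[a]counitr -{1}[b]counitr mulr_suml; apply: eq_bigr => p _.
  rewrite mulr_sumr; apply: eq_bigr => q _.
  by rewrite -scalerAl -scalerAr scalerA.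
rewrite (linear_map_sum antipode_linear); apply: eq_bigr => p _.
rewrite (linear_map_sum antipode_linear) exchange_big /=; apply: eq_bigr => q _.
symmetry; under eq_bigr => p' _ do under eq_bigr => q' _ do rewrite mulrA.
under eq_bigr => p' _ do rewrite -mulr_suml antipodeR_mull -scalerAl.
rewrite -scaler_sumr antipodeR_mull scalerA (linear_mapZ antipode_linear).
by rewrite [e q.2 * _]mulrC.
Qed.

(* In the expansion, S(a_1 b_1) a_2 b_2 = S((ab)_1) (ab)_2 contracts to a counit. *)
Lemma antipodeM a b : S (a * b) = S b * S a.
Proof.
have outer_trilinear : trilinear_map (fun u1 u2 u3 =>
    \sum_(q <- D b) \sum_(q' <- D q.2) S (u1 * q.1) * (u2 * q'.1) * S q'.2 * S u3).
  by apply: trilinear_mapP => *; apply: linear_map_sum_fun => q;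
    apply: linear_map_sum_fun => q'; multilinear.
have inner_trilinear u1 u2 u3 :
    trilinear_map (fun v1 v2 v3 => S (u1 * v1) * (u2 * v2) * S v3 * S u3).
  by apply: trilinear_mapP => *; multilinear.
have middle_bilinear u w : bilinear_map (fun x y : A => S x * y * u * w).
  by apply: bilinear_mapP => *; multilinear.
have contract_middle u w y : \sum_(p <- D y) S p.1 * p.2 * u * w = e y *: (u * w).
  by rewrite -mulr_suml antipodeL_mulr -scalerAl.
rewrite antipode_mul_expand -(coassoc _ outer_trilinear) /=.
under eq_bigr => p _ do under eq_bigr => p' _ do
  rewrite -(coassoc _ (inner_trilinear p'.1 p'.2 p.2)) /=.
under eq_bigr => p _ do rewrite exchange_big /=.
under eq_bigr => p _ do under eq_bigr => q _ do
  rewrite -(coproductM _ _ (middle_bilinear (S q.2) (S p.2))) contract_middle counitM.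
transitivity ((\sum_(q <- D b) e q.1 *: S q.2) * (\sum_(p <- D a) e p.1 *: S p.2)).
  rewrite exchange_big mulr_suml; apply: eq_bigr => q _.
  rewrite mulr_sumr; apply: eq_bigr => p _ /=.
  by rewrite -scalerAl -scalerAr scalerA mulrC.
congr (_ * _).
  by rewrite -{2}(counitl b) (linear_map_sum antipode_linear);
    apply: eq_bigr => q _; rewrite (linear_mapZ antipode_linear).
by rewrite -{2}(counitl a) (linear_map_sum antipode_linear);
  apply: eq_bigr => p _; rewrite (linear_mapZ antipode_linear).
Qed.

Lemma adcoact_sum (U : nmodType) (f : A -> A -> U) x :
  \sum_(r <- adcoact D S x) f r.1 r.2 =
  \sum_(p <- D x) \sum_(q <- D p.1) f (q.1 * S p.2) q.2.
Proof. exact: big_allpairs_dep. Qed.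

Let twisted_bilinear (U : lmodType K) (f : A -> A -> U) : bilinear_map f ->
  bilinear_map (fun u v => \sum_(q <- D u) f (q.1 * S v) q.2).
Proof.
move=> f_bilinear; apply: bilinear_mapP => [v|u].
  apply: (coproduct_linear (f := fun a b => f (a * S v) b)).
  apply: bilinear_mapP => [w|a]; last exact: bilinear_map_r.
  exact: (linear_map_comp (bilinear_map_l _ f_bilinear) (linear_map_mull _)).
apply: linear_map_sum_fun => q.
exact: (linear_map_comp (bilinear_map_l _ f_bilinear)
         (linear_map_comp (linear_map_mulr _) antipode_linear)).
Qed.

Lemma adcoact_linear (U : lmodType K) (f : A -> A -> U) : bilinear_map f ->
  linear_map (fun x => \sum_(r <- adcoact D S x) f r.1 r.2).
Proof.
move=> f_bilinear c x y; rewrite !adcoact_sum.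
exact: (coproduct_linear (twisted_bilinear f_bilinear)).
Qed.

Lemma adcoact_counit x : \sum_(r <- adcoact D S x) e r.2 *: r.1 = e x *: 1.
Proof.
rewrite (adcoact_sum (fun u v => e v *: u)) -antipodeR; apply: eq_bigr => p _.
rewrite -[in RHS](counitr p.1) mulr_suml.
by apply: eq_bigr => q _; rewrite scalerAl.
Qed.

Section InvariantElement.
Variable alpha : A.
Hypothesis alpha_invariant : teq2 (adcoact D S alpha) [:: (1, alpha)].

(* Ad(b alpha) = b_1 alpha_1 S(alpha_3) S(b_3) (x) b_2 alpha_2, and the
   invariance of alpha collapses the alpha-legs. *)
Lemma adcoactM_invariant b :
  teq2 (adcoact D S (b * alpha)) [seq (r.1, r.2 * alpha) | r <- adcoact D S b].
Proof.
move=> U f f_bilinear; rewrite big_map [LHS]adcoact_sum.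
rewrite (adcoact_sum (fun u v => f u (v * alpha))).
rewrite (coproductM _ _ (twisted_bilinear f_bilinear)); apply: eq_bigr => p _.
have twisted_bilinear_uv u v : bilinear_map (fun a c => f (a * S (u * v)) c).
  apply: bilinear_mapP => [w|a]; last exact: bilinear_map_r.
  exact: (linear_map_comp (bilinear_map_l _ f_bilinear) (linear_map_mull _)).
under eq_bigr => p' _ do rewrite (coproductM _ _ (twisted_bilinear_uv _ _)) antipodeM.
rewrite exchange_big /=; apply: eq_bigr => q _.
have sandwich_bilinear : bilinear_map (fun u v => f (q.1 * u * S p.2) (q.2 * v)).
  apply: bilinear_mapP => [w|u].
    exact: (linear_map_comp (bilinear_map_l _ f_bilinear)
             (linear_map_comp (linear_map_mull _) (linear_map_mulr _))).
  exact: (linear_map_comp (bilinear_map_r _ f_bilinear) (linear_map_mulr _)).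
have := alpha_invariant sandwich_bilinear; rewrite big_seq1 /= mulr1 => <-.
rewrite (adcoact_sum (fun u v => f (q.1 * u * S p.2) (q.2 * v))).
by apply: eq_bigr => p' _; apply: eq_bigr => q' _; rewrite !mulrA.
Qed.

Lemma adcoact_rmul_sub a k :
  teq2 (adcoact D S (a * alpha - k *: a))
       [seq (r.1, r.2 * alpha - k *: r.2) | r <- adcoact D S a].
Proof.
move=> U f f_bilinear.
rewrite (linear_mapB (adcoact_linear f_bilinear)).
rewrite (linear_mapZ (adcoact_linear f_bilinear)).
rewrite (@adcoactM_invariant a _ _ f_bilinear) !big_map scaler_sumr -sumrB.
apply: eq_bigr => r _.
by rewrite (linear_mapB (bilinear_map_r _ f_bilinear))
  (linear_mapZ (bilinear_map_r _ f_bilinear)).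
Qed.

Lemma M_typeI_quotienting : quotienting_subspace D e S (M_typeI e alpha).
Proof.
split.
- move=> _ [a ->].
  rewrite (linear_formB counit_linear) (linear_formZ counit_linear).
  by rewrite counitM mulrC subrr.
- by exists 0; rewrite mul0r scaler0 subr0.
- move=> c _ _ [a ->] [b ->]; exists (c *: a + b).
  by rewrite mulrDl -scalerAl scalerBr !scalerDr !scalerA [_ * c]mulrC opprD addrACA.
- by move=> b _ [a ->]; exists (b * a); rewrite mulrBr mulrA scalerAr.
- move=> _ [a ->]; exists [seq (r.1, r.2 * alpha - e alpha *: r.2) | r <- adcoact D S a].
  split; last exact: adcoact_rmul_sub.
  by move=> _ /mapP [r _ ->]; exists r.2.
Qed.

Lemma M_typeII_quotienting : quotienting_subspace D e S (M_typeII e alpha).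
Proof.
split.
- by move=> _ [a [a_counit ->]]; rewrite counitM a_counit mul0r.
- by exists 0; rewrite mul0r (linear_form0 counit_linear).
- move=> c _ _ [a [a_counit ->]] [b [b_counit ->]]; exists (c *: a + b); split.
    by rewrite counit_linear a_counit b_counit scaler0 addr0.
  by rewrite mulrDl -scalerAl.
- move=> b _ [a [a_counit ->]]; exists (b * a); split.
    by rewrite counitM a_counit mulr0.
  by rewrite mulrA.
- move=> _ [a [a_counit ->]]; set beta := alpha - _ *: 1.
  exists [seq (r.1, (r.2 - e r.2 *: 1) * beta) | r <- adcoact D S a]; split.
    move=> _ /mapP [r _ ->]; exists (r.2 - e r.2 *: 1); split=> //.
    rewrite (linear_formB counit_linear) (linear_formZ counit_linear).
    by rewrite counit1 mulr1 subrr.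
  move=> U f f_bilinear.
  have -> : a * beta = a * alpha - (e alpha + 1) *: a by rewrite mulrBr -scalerAr mulr1.
  rewrite (adcoact_rmul_sub _ _ f_bilinear) !big_map /=.
  have counit_leg : \sum_(r <- adcoact D S a) e r.2 *: f r.1 beta = 0.
    transitivity (f (\sum_(r <- adcoact D S a) e r.2 *: r.1) beta).
      rewrite (linear_map_sum (bilinear_map_l _ f_bilinear)); apply: eq_bigr => r _.
      by rewrite (linear_mapZ (bilinear_map_l _ f_bilinear)).
    rewrite adcoact_counit a_counit scale0r.
    exact: (linear_map0 (bilinear_map_l _ f_bilinear)).
  transitivity (\sum_(r <- adcoact D S a)
                 (f r.1 ((r.2 - e r.2 *: 1) * beta) + e r.2 *: f r.1 beta)); last first.
    by rewrite big_split /= counit_leg addr0.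
  apply: eq_bigr => r _; rewrite -(linear_mapZ (bilinear_map_r _ f_bilinear)).
  rewrite -(linear_mapD (bilinear_map_r _ f_bilinear)); congr (f _ _).
  by rewrite mulrBl -scalerAl mul1r subrK /beta mulrBr -scalerAr mulr1.
Qed.

End InvariantElement.

End HopfAlgebra.

Lemma double_stable_iff (K : fieldType) (H A : algType K)
    (DH : H -> seq (H * H)) (SH : H -> H) (pr : H -> A -> K) (P Q : H -> Prop) :
  (forall x, P x <-> Q x) -> double_stable DH SH pr P -> double_stable DH SH pr Q.
Proof.
by move=> PQ [stableH stableA]; split=> [h|a] x /PQ Px; apply/PQ;
  [apply: stableH | apply: stableA].
Qed.

Section HopfPairing.
Variables (K : fieldType) (H A : algType K).
Variables (DH : H -> seq (H * H)) (eH : H -> K) (SH : H -> H).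
Variables (DA : A -> seq (A * A)) (eA : A -> K) (SA : A -> A).
Hypotheses (hopfH : is_hopf DH eH SH) (hopfA : is_hopf DA eA SA).
Variable pr : H -> A -> K.
Hypothesis pairing : is_hopf_pairing DH eH DA eA pr.

Lemma pairing_linear_l a : linear_form (pr^~ a).
Proof.
by case: pairing => pr_linear_l *; apply: linear_formP => *; exact: pr_linear_l.
Qed.

Lemma pairing_linear_r h : linear_form (pr h).
Proof.
by case: pairing => _ pr_linear_r *; apply: linear_formP => *; exact: pr_linear_r.
Qed.

Lemma pairingM_l h g a : pr (h * g) a = \sum_(p <- DA a) pr h p.1 * pr g p.2.
Proof. by case: pairing. Qed.

Lemma pairingM_r h a b : pr h (a * b) = \sum_(p <- DH h) pr p.1 a * pr p.2 b.
Proof. by case: pairing. Qed.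

Lemma pairing1_l a : pr 1 a = eA a.
Proof. by case: pairing => _ _ _ _ []. Qed.

Lemma pairing1_r h : pr h 1 = eH h.
Proof. by case: pairing => _ _ _ _ []. Qed.

Let SH_linear c x y : SH (c *: x + y) = c *: SH x + SH y.
Proof. exact: (antipode_linear hopfH). Qed.

Let SA_linear c x y : SA (c *: x + y) = c *: SA x + SA y.
Proof. exact: (antipode_linear hopfA). Qed.

Let pr_linear_l c h1 h2 a : pr (c *: h1 + h2) a = c * pr h1 a + pr h2 a.
Proof. exact: pairing_linear_l. Qed.

Let pr_linear_r c h a1 a2 : pr h (c *: a1 + a2) = c * pr h a1 + pr h a2.
Proof. exact: pairing_linear_r. Qed.

Ltac multilinear :=
  apply: linear_formP => ? ? ? /=;
  rewrite ?SH_linear ?SA_linear ?pr_linear_l ?pr_linear_r; ring.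

Lemma pairing_antipodeR h a :
  \sum_(p <- DH h) \sum_(q <- DA a) pr p.1 q.1 * pr p.2 (SA q.2) = eH h * eA a.
Proof.
transitivity (pr h (\sum_(q <- DA a) q.1 * SA q.2)).
  rewrite (linear_form_sum (pairing_linear_r h)) exchange_big.
  by apply: eq_bigr => q _; rewrite pairingM_r.
by rewrite (antipodeR hopfA) (linear_formZ (pairing_linear_r h)) pairing1_r mulrC.
Qed.

Lemma pairing_antipodeL h a :
  \sum_(p <- DH h) \sum_(q <- DA a) pr (SH p.1) q.1 * pr p.2 q.2 = eH h * eA a.
Proof.
transitivity (pr (\sum_(p <- DH h) SH p.1 * p.2) a).
  rewrite (linear_form_sum (pairing_linear_l a)).
  by apply: eq_bigr => p _; rewrite pairingM_l.
by rewrite (antipodeL hopfH) (linear_formZ (pairing_linear_l a)) pairing1_l.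
Qed.

(* Both sides equal <S h_1, a_1> <h_2, a_2> <h_3, S a_3>, by the two
   previous identities applied to the last two, resp. first two, factors. *)
Lemma pairing_antipode h a : pr (SH h) a = pr h (SA a).
Proof.
transitivity (\sum_(p <- DH h) \sum_(q <- DA a) pr (SH p.1) q.1 * (eH p.2 * eA q.2)).
  rewrite -{1}(counitr hopfH h) (linear_map_sum (antipode_linear hopfH)).
  rewrite (linear_form_sum (pairing_linear_l a)); apply: eq_bigr => p _.
  rewrite (linear_mapZ (antipode_linear hopfH)) (linear_formZ (pairing_linear_l a)).
  rewrite -{1}(counitr hopfA a) (linear_form_sum (pairing_linear_r _)) mulr_sumr.
  by apply: eq_bigr => q _; rewrite (linear_formZ (pairing_linear_r _)); ring.
under eq_bigr => p _ do under eq_bigr => q _ do rewrite -pairing_antipodeR mulr_sumr.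
under eq_bigr => p _ do rewrite exchange_big.
under eq_bigr => p _ do under eq_bigr => i _ do
  under eq_bigr => q _ do rewrite mulr_sumr.
have outer_trilinear : trilinear_map (fun u1 u2 u3 =>
    \sum_(q <- DA a) \sum_(q' <- DA q.2)
      pr (SH u1) q.1 * (pr u2 q'.1 * pr u3 (SA q'.2)) : K^o).
  by apply: trilinear_mapP => *; apply: linear_map_sum_fun => q;
    apply: linear_map_sum_fun => q'; multilinear.
have := coassoc hopfH h outer_trilinear; rewrite /= => <-.
have inner_trilinear u1 u2 u3 : trilinear_map (fun v1 v2 v3 =>
    pr (SH u1) v1 * (pr u2 v2 * pr u3 (SA v3)) : K^o).
  by apply: trilinear_mapP => *; multilinear.
under eq_bigr => p _ do under eq_bigr => i _ do
  rewrite -(coassoc hopfA _ (inner_trilinear i.1 i.2 p.2)) /=.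
have contract x y w : \sum_(i <- DH x) \sum_(q <- DA y)
    pr (SH i.1) q.1 * (pr i.2 q.2 * w) = eH x * eA y * w.
  rewrite -pairing_antipodeL mulr_suml; apply: eq_bigr => i _.
  by rewrite mulr_suml; apply: eq_bigr => q _; rewrite mulrA.
under eq_bigr => p _ do rewrite exchange_big.
under eq_bigr => p _ do under eq_bigr => q _ do rewrite contract.
symmetry; rewrite -{1}(counitl hopfH h) (linear_form_sum (pairing_linear_l _)).
apply: eq_bigr => p _; rewrite (linear_formZ (pairing_linear_l _)).
rewrite -{1}(counitl hopfA a) (linear_map_sum (antipode_linear hopfA)).
rewrite (linear_form_sum (pairing_linear_r _)) mulr_sumr; apply: eq_bigr => q _.
rewrite (linear_mapZ (antipode_linear hopfA)) (linear_formZ (pairing_linear_r _)).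
by ring.
Qed.

Lemma pairing_dactH h x c :
  pr (dactH DH SH h x) c = \sum_(r <- adcoact DA SA c) pr h r.1 * pr x r.2.
Proof.
rewrite /dactH (linear_form_sum (pairing_linear_l c)).
rewrite (adcoact_sum DA SA (fun u v => pr h u * pr x v)).
under eq_bigr => p _ do rewrite pairingM_l.
under eq_bigr => p _ do under eq_bigr => q _ do
  rewrite pairingM_l pairing_antipode mulr_suml.
under [RHS]eq_bigr => q _ do under eq_bigr => q' _ do rewrite pairingM_r mulr_suml.
rewrite exchange_big; apply: eq_bigr => q _ /=.
rewrite exchange_big; apply: eq_bigr => q' _ /=.
by apply: eq_bigr => p _; ring.
Qed.

Lemma pairing_dactA a x b : pr (dactA DH pr a x) b = pr x (a * b) - pr x a * eA b.
Proof.
rewrite /dactA (linear_formB (pairing_linear_l b)).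
rewrite (linear_form_sum (pairing_linear_l b)) (linear_formZ (pairing_linear_l b)).
rewrite pairing1_l pairingM_r; congr (_ - _); apply: eq_bigr => p _.
by rewrite (linear_formZ (pairing_linear_l b)).
Qed.

Lemma counit_dactH h x : eH x = 0 -> eH (dactH DH SH h x) = 0.
Proof.
move=> x_counit; rewrite /dactH (linear_form_sum (counit_linear hopfH)) big1 // => p _.
by rewrite !(counitM hopfH) x_counit mulr0 mul0r.
Qed.

Lemma counit_dactA a x : eH (dactA DH pr a x) = 0.
Proof.
rewrite /dactA (linear_formB (counit_linear hopfH)).
rewrite (linear_form_sum (counit_linear hopfH)).
rewrite (linear_formZ (counit_linear hopfH)) (counit1 hopfH) mulr1; apply/eqP.
rewrite subr_eq0 -{2}(counitr hopfH x) (linear_form_sum (pairing_linear_l a)).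
apply/eqP/eq_bigr => p _.
by rewrite (linear_formZ (counit_linear hopfH)) (linear_formZ (pairing_linear_l a)) mulrC.
Qed.

Variable alpha : A.

Definition L_alpha_dual x :=
  eH x = 0 /\ forall b, pr x (b * alpha) = eA alpha * pr x b.

(* [Lt_alpha] and [L_alpha1] are the cases k = eA alpha and k = eA alpha + 1. *)
Definition L_alpha_k k x :=
  eH x = 0 /\ forall b, eA b = 0 -> pr x (b * alpha) = pr x b * k.

Lemma L_alpha_dualE :
  (forall h, (forall a, pr h a = 0) -> h = 0) ->
  forall x, L_alpha DH eH eA pr alpha x <-> L_alpha_dual x.
Proof.
move=> nondegenerate x; split=> -[x_counit x_alpha]; split=> //.
  move=> b; rewrite pairingM_r.
  transitivity (pr (\sum_(p <- DH x) pr p.2 alpha *: p.1) b).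
    rewrite (linear_form_sum (pairing_linear_l b)); apply: eq_bigr => p _.
    by rewrite (linear_formZ (pairing_linear_l b)) mulrC.
  by rewrite x_alpha (linear_formZ (pairing_linear_l b)).
apply/eqP; rewrite -subr_eq0; apply/eqP; apply: nondegenerate => b.
rewrite (linear_formB (pairing_linear_l b)) (linear_form_sum (pairing_linear_l b)).
rewrite (linear_formZ (pairing_linear_l b)) -x_alpha pairingM_r.
apply/eqP; rewrite subr_eq0; apply/eqP; apply: eq_bigr => p _.
by rewrite (linear_formZ (pairing_linear_l b)) mulrC.
Qed.

Lemma L_alpha_dual_tangent x :
  L_alpha_dual x <-> quantum_tangent_space eH pr (M_typeI eA alpha) x.
Proof.
split=> -[x_counit x_alpha]; split=> //.
  move=> _ [a ->].
  rewrite (linear_formB (pairing_linear_r x)) (linear_formZ (pairing_linear_r x)).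
  by rewrite x_alpha subrr.
move=> b; apply/eqP; rewrite -subr_eq0 -(linear_formZ (pairing_linear_r x)).
by rewrite -(linear_formB (pairing_linear_r x)) x_alpha //; exists b.
Qed.

Lemma L_alpha_k_tangent x :
  L_alpha_k (eA alpha + 1) x <-> quantum_tangent_space eH pr (M_typeII eA alpha) x.
Proof.
have mul_sub b : b * (alpha - (eA alpha + 1) *: 1) = b * alpha - (eA alpha + 1) *: b.
  by rewrite mulrBr -scalerAr mulr1.
split=> -[x_counit x_alpha]; split=> //.
  move=> _ [a [a_counit ->]]; rewrite mul_sub (linear_formB (pairing_linear_r x)).
  by rewrite (linear_formZ (pairing_linear_r x)) x_alpha // mulrC subrr.
move=> b b_counit; apply/eqP.
rewrite -subr_eq0 mulrC -(linear_formZ (pairing_linear_r x)).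
by rewrite -(linear_formB (pairing_linear_r x)) -mul_sub x_alpha //; exists b.
Qed.

Lemma L_alpha_k_rmul k x : L_alpha_k k x ->
  forall y, pr x (y * alpha) = pr x y * k + eA y * pr x alpha.
Proof.
move=> [x_counit x_alpha] y.
have := x_alpha (y - eA y *: 1).
rewrite (linear_formB (counit_linear hopfA)) (linear_formZ (counit_linear hopfA)).
rewrite (counit1 hopfA) mulr1 subrr => /(_ erefl).
rewrite mulrBl -scalerAl mul1r !(linear_formB (pairing_linear_r x)).
rewrite !(linear_formZ (pairing_linear_r x)) pairing1_r x_counit.
by move/eqP; rewrite mulr0 subr0 subr_eq => /eqP ->; ring.
Qed.

Lemma L_alpha_dual_dactA a x :
  L_alpha_dual x -> L_alpha_dual (dactA DH pr a x).
Proof.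
move=> [_ x_alpha]; split=> [|b]; first exact: counit_dactA.
by rewrite !pairing_dactA mulrA x_alpha (counitM hopfA); ring.
Qed.

Lemma L_alpha_k_dactA k a x : L_alpha_k k x -> L_alpha_k k (dactA DH pr a x).
Proof.
move=> [_ x_alpha]; split=> [|b b_counit]; first exact: counit_dactA.
rewrite !pairing_dactA mulrA x_alpha; last by rewrite (counitM hopfA) b_counit mulr0.
by rewrite (counitM hopfA) b_counit; ring.
Qed.

Hypothesis alpha_invariant : teq2 (adcoact DA SA alpha) [:: (1, alpha)].

Lemma pairing_dactH_invariant h x b :
  pr (dactH DH SH h x) (b * alpha) =
  \sum_(r <- adcoact DA SA b) pr h r.1 * pr x (r.2 * alpha).
Proof.
have pr_bilinear : bilinear_map (fun u v => pr h u * pr x v : K^o).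
  by apply: bilinear_mapP => *; multilinear.
have := adcoactM_invariant hopfA alpha_invariant b pr_bilinear.
by rewrite big_map pairing_dactH.
Qed.

Lemma L_alpha_dual_dactH h x :
  L_alpha_dual x -> L_alpha_dual (dactH DH SH h x).
Proof.
move=> [x_counit x_alpha]; split=> [|b]; first exact: counit_dactH.
rewrite pairing_dactH_invariant pairing_dactH mulr_sumr.
by apply: eq_bigr => r _; rewrite x_alpha mulrCA.
Qed.

(* On ker eA the extra term eA r.2 <x, alpha> of [L_alpha_k_rmul] sums to
   <h, eA b 1> <x, alpha> = 0, by [adcoact_counit]. *)
Lemma L_alpha_k_dactH k h x : L_alpha_k k x -> L_alpha_k k (dactH DH SH h x).
Proof.
move=> x_k; have [x_counit _] := x_k; split=> [|b b_counit].
  exact: counit_dactH.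
rewrite pairing_dactH_invariant pairing_dactH mulr_suml.
under eq_bigr => r _ do rewrite (L_alpha_k_rmul x_k) mulrDr.
rewrite big_split /= -[RHS]addr0; congr (_ + _).
  by apply: eq_bigr => r _; rewrite mulrA.
transitivity (pr h (\sum_(r <- adcoact DA SA b) eA r.2 *: r.1) * pr x alpha).
  rewrite (linear_form_sum (pairing_linear_r h)) mulr_suml; apply: eq_bigr => r _.
  by rewrite (linear_formZ (pairing_linear_r h)); ring.
rewrite (adcoact_counit hopfA) b_counit scale0r.
by rewrite (linear_form0 (pairing_linear_r h)) mul0r.
Qed.

Lemma L_alpha_dual_double_stable : double_stable DH SH pr L_alpha_dual.
Proof. by split=> *; [apply: L_alpha_dual_dactH | apply: L_alpha_dual_dactA]. Qed.

Lemma L_alpha_k_double_stable k : double_stable DH SH pr (L_alpha_k k).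
Proof. by split=> *; [apply: L_alpha_k_dactH | apply: L_alpha_k_dactA]. Qed.

End HopfPairing.

Unset Implicit Arguments.

Theorem proposition2p5
  (H A : algType CC)
  (DH : H -> seq (H * H)) (eH : H -> CC) (SH : H -> H)
  (DA : A -> seq (A * A)) (eA : A -> CC) (SA : A -> A)
  (hopfH : is_hopf DH eH SH) (hopfA : is_hopf DA eA SA)
  (pr : H -> A -> CC)
  (hpair : is_hopf_pairing DH eH DA eA pr)
  (hnd : pairing_nondegenerate pr)
  (alpha : A)
  (alpha_nontriv : ~ (exists c : CC, alpha = c%:A))
  (alpha_inv : teq2 (adcoact DA SA alpha) [:: (1, alpha)]) :
  [/\ double_stable DH SH pr (L_alpha DH eH eA pr alpha),
      double_stable DH SH pr (Lt_alpha eH eA pr alpha),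
      double_stable DH SH pr (L_alpha1 eH eA pr alpha),
      quotienting_subspace DA eA SA (M_typeI eA alpha)
        /\ (forall x, L_alpha DH eH eA pr alpha x <->
                      quantum_tangent_space eH pr (M_typeI eA alpha) x) &
      quotienting_subspace DA eA SA (M_typeII eA alpha)
        /\ (forall x, L_alpha1 eH eA pr alpha x <->
                      quantum_tangent_space eH pr (M_typeII eA alpha) x)].
Proof.
have L_alphaE := L_alpha_dualE hpair alpha hnd.1.
have stable_k := L_alpha_k_double_stable hopfH hopfA hpair alpha_inv.
split.
- apply: double_stable_iff (L_alpha_dual_double_stable hopfH hopfA hpair alpha_inv).
  by move=> x; rewrite L_alphaE.
- exact: stable_k.
- exact: stable_k.
- split; first exact: (M_typeI_quotienting hopfA alpha_inv).
  by move=> x; rewrite L_alphaE; exact: (L_alpha_dual_tangent hpair).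
- split; first exact: (M_typeII_quotienting hopfA alpha_inv).
  exact: L_alpha_k_tangent hpair alpha.
Qed.
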